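(* The doctrine of variations $\Psi_{\mathbf{PAsm}}:\mathbf{PAsm}^{op}\to\mathbf{InfSL}$ is a weak hyperdoctrine which satisfies the Rule of Choice and the Axiom of Choice on every object, and it is arithmetic.
   Context: $\mathbf{PAsm}$ is the category of partitioned assemblies: objects $(P,T)$ with $P$ a set and $T:P\to\mathbb N$ a function; arrows $f:(P,T)\to(P',T')$ are functions $f:P\to P'$ such that for some $t$, for all $x$, $\varphi_t(T(x))$ is defined and equals $T'(f(x))$ ($\varphi_t$ the $t$-th partial recursive function). It has finite limits, finite coproducts, weak exponentials and the parameterized natural number object $(\mathbb N,\mathrm{id})$. For a category $\mathcal C$ with finite products and weak pullbacks, $\Psi_{\mathcal C}$ sends $A$ to the poset reflection of the slice $\mathcal C/A$ and acts on arrows by weak pullback. An elementary doctrine on a category $\mathcal C$ with finite products is a functor $P:\mathcal C^{op}\to\mathbf{InfSL}$ with, for each $A$, $\delta_A\in P(A\times A)$ such that $\alpha\mapsto P_{\langle pr_1,pr_2\rangle}(\alpha)\wedge P_{\langle pr_2,pr_3\rangle}(\delta_A)$ is left adjoint to $P_{\langle pr_1,pr_2,pr_2\rangle}:P(X\times A\times A)\to P(X\times A)$ for all $X$. A weak hyperdoctrine is an elementary doctrine such that $\mathcal C$ is weakly cartesian closed (weak exponentials $W$ with weak evaluation $ev:W\times A\to B$ through which every $C\times A\to B$ factors as $ev\circ(g\times\mathrm{id})$ for some not necessarily unique $g$), each fibre is a Heyting algebra and each reindexing a Heyting homomorphism, and each $P_{pr_1}$ for a projection $pr_1:A\times B\to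 A$ has left and right adjoints $\exists,\forall$ satisfying the Beck–Chevalley condition with respect to reindexing along $f\times\mathrm{id}_B$. A relation $R\in P(A\times B)$ is entire if $a:A\mid\top\vdash\exists b.R(a,b)$. The Rule of Choice holds if for every entire $R$ there is an arrow $f:A\to B$ with $a:A\mid\top\vdash R(a,f(a))$. The Axiom of Choice holds on $A$ if for every $B$ and every $R\in P(A\times B)$: $\forall a:A.\exists b:B.R(a,b)\vdash\exists f:W.\forall a:A.R(a,ev(f,a))$ with $ev:W\times A\to B$ a weak evaluation. A parameterized natural number object $(\mathbf N,0,s)$ satisfies induction in $P$ if for all $A$ and $\phi\in P(A\times\mathbf N)$, whenever $a:A\vdash\phi(a,0)$ and $a:A,m:\mathbf N\mid\phi(a,m)\vdash\phi(a,s(m))$, then $a:A,n:\mathbf N\vdash\phi(a,n)$. A weak hyperdoctrine is arithmetic if its base has a parameterized natural number object satisfying induction in it. *)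

From Stdlib Require Import Arith Cantor.

Set Implicit Arguments.

Definition cpair (x y : nat) : nat := Cantor.to_nat (x, y).

Inductive code : Type :=
| cZero | cSucc | cId | cFst | cSnd
| cPair (f g : code)
| cComp (f g : code)
| cRec (f g : code)       (* <x,0> |-> f x ; <x,n+1> |-> g <x,<n, R<x,n>>> *)
| cMu (f : code).         (* x |-> least n with f<x,n> = 0 (all earlier defined) *)

Inductive eval : code -> nat -> nat -> Prop :=
| ev_zero x : eval cZero x 0
| ev_succ x : eval cSucc x (S x)
| ev_id x : eval cId x x
| ev_fst x : eval cFst x (fst (Cantor.of_nat x))
| ev_snd x : eval cSnd x (snd (Cantor.of_nat x))
| ev_pair f g x a b : eval f x a -> eval g x b -> eval (cPair f g) x (cpair a b)
| ev_comp f g x y z : eval g x y -> eval f y z -> eval (cComp f g) x z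
| ev_rec0 f g z x r : Cantor.of_nat z = (x, 0) -> eval f x r -> eval (cRec f g) z r
| ev_recS f g z x n r r' : Cantor.of_nat z = (x, S n) ->
    eval (cRec f g) (cpair x n) r -> eval g (cpair x (cpair n r)) r' ->
    eval (cRec f g) z r'
| ev_mu f x n : eval f (cpair x n) 0 ->
    (forall m, m < n -> exists k, eval f (cpair x m) (S k)) ->
    eval (cMu f) x n.

Fixpoint code_nat (c : code) : nat :=
  match c with
  | cZero => cpair 0 0
  | cSucc => cpair 1 0
  | cId => cpair 2 0
  | cFst => cpair 3 0
  | cSnd => cpair 4 0
  | cPair f g => cpair 5 (cpair (code_nat f) (code_nat g))
  | cComp f g => cpair 6 (cpair (code_nat f) (code_nat g))
  | cRec f g => cpair 7 (cpair (code_nat f) (code_nat g))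
  | cMu f => cpair 8 (code_nat f)
  end.

(* phi t x y  <->  phi_t(x) is defined and equals y
   (phi_t is everywhere undefined if t is not the number of a code) *)
Definition phi (t x y : nat) : Prop := exists c, code_nat c = t /\ eval c x y.

Record pasm : Type := Pasm { carrier :> Type; realizer : carrier -> nat }.

Definition tracked (X Y : pasm) (f : X -> Y) : Prop :=
  exists t, forall x, phi t (realizer X x) (realizer Y (f x)).
Arguments tracked {X Y} f.

Definition pone : pasm := Pasm (fun _ : unit => 0).
Definition pprod (X Y : pasm) : pasm :=
  Pasm (fun p : X * Y => cpair (realizer X (fst p)) (realizer Y (snd p))).

Definition pN : pasm := Pasm (fun n : nat => n).

(* An element of Psi(A) is represented by an object of the slice       *)
(* PAsm/A; the poset reflection is handled by working with the         *)
(* preorder vle (and its induced equivalence veq).                     *)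

Record var (A : pasm) : Type :=
  Var { vdom : pasm; vmap : vdom -> A; vtr : tracked vmap }.
Arguments Var {A} vdom vmap vtr.

Definition vle {A : pasm} (a b : var A) : Prop :=
  exists k : vdom a -> vdom b, tracked k /\ forall y, vmap b (k y) = vmap a y.

Definition veq {A : pasm} (a b : var A) : Prop := vle a b /\ vle b a.

Definition pb_obj {A B : pasm} (f : B -> A) (a : var A) : pasm :=
  Pasm (fun p : {q : B * vdom a | f (fst q) = vmap a (snd q)} =>
          cpair (realizer B (fst (proj1_sig p))) (realizer (vdom a) (snd (proj1_sig p)))).

Lemma pb_proj_tracked {A B : pasm} (f : B -> A) (a : var A) :
  tracked (fun p : pb_obj f a => fst (proj1_sig p)).
Proof.
  exists (code_nat cFst); intros p; exists cFst; split; [reflexivity|].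
  simpl. unfold cpair. pose proof (ev_fst (Cantor.to_nat
     (realizer B (fst (proj1_sig p)), realizer (vdom a) (snd (proj1_sig p))))) as H.
  rewrite Cantor.cancel_of_to in H. exact H.
Qed.

Definition reindex {A B : pasm} (f : B -> A) (a : var A) : var B :=
  Var (pb_obj f a) (fun p => fst (proj1_sig p)) (pb_proj_tracked f a).

Definition is_top {A : pasm} (t : var A) : Prop := forall x : var A, vle x t.
Definition is_bot {A : pasm} (b : var A) : Prop := forall x : var A, vle b x.
Definition is_meet {A : pasm} (a b m : var A) : Prop :=
  forall x, vle x m <-> (vle x a /\ vle x b).
Definition is_join {A : pasm} (a b j : var A) : Prop :=
  forall x, vle j x <-> (vle a x /\ vle b x).
Definition is_imp {A : pasm} (a b i : var A) : Prop :=
  forall x m, is_meet x a m -> (vle x i <-> vle m b).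

Definition valid {A : pasm} (x : var A) : Prop := forall y : var A, vle y x.

(* e is (a representative of) the existential quantification of
   alpha in Psi(A x B) along pr1 : A x B -> A, i.e. the value at alpha of
   the left adjoint to Psi(pr1); similarly for the universal one. *)
Definition is_exists_of {A B : pasm} (alpha : var (pprod A B)) (e : var A) : Prop :=
  forall beta : var A, vle e beta <-> vle alpha (reindex (fun p : pprod A B => fst p) beta).
Definition is_forall_of {A B : pasm} (alpha : var (pprod A B)) (u : var A) : Prop :=
  forall beta : var A, vle beta u <-> vle (reindex (fun p : pprod A B => fst p) beta) alpha.

Definition weak_eval {A B W : pasm} (ev : pprod W A -> B) : Prop :=
  tracked ev /\
  forall (C : pasm) (g : pprod C A -> B), tracked g ->
    exists h : C -> W, tracked h /\ forall c a, ev (h c, a) = g (c, a).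

From Stdlib Require Import Arith Cantor Lia Classical ClassicalEpsilon.

(* An element of a fibre is a family of assemblies over [A], and [a <= b] is a tracked map
   over [A].  Meets and reindexing are pullbacks, joins are tagged sums, and existential
   quantification is composition with a projection.  Implication and universal
   quantification need realizers acting on realizers, i.e. an application [app] on indices;
   the same [app] makes the object of tracked functions a weak exponential.  [app] comes
   from a universal function: codes are simulated by a small-step machine whose runs are
   primitive recursive and whose halting time is found by minimisation.  The rule of choice
   holds because [top <= exists b, R a b] literally is a tracked section of [R]; since the
   weak exponential names such sections, the axiom of choice follows.  Induction holds
   because tracked realizers of the base case and of the step combine by primitive
   recursion. *)

Definition cfst (n : nat) : nat := fst (Cantor.of_nat n).
Definition csnd (n : nat) : nat := snd (Cantor.of_nat n).

Lemma of_nat_cpair a b : Cantor.of_nat (cpair a b) = (a, b).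
Proof. apply Cantor.cancel_of_to. Qed.

Lemma cfst_cpair a b : cfst (cpair a b) = a.
Proof. unfold cfst. rewrite of_nat_cpair. reflexivity. Qed.

Lemma csnd_cpair a b : csnd (cpair a b) = b.
Proof. unfold csnd. rewrite of_nat_cpair. reflexivity. Qed.

Lemma cpair_eta n : cpair (cfst n) (csnd n) = n.
Proof. unfold cpair, cfst, csnd. rewrite <- surjective_pairing. apply Cantor.cancel_to_of. Qed.

Lemma cpair_inj a b c d : cpair a b = cpair c d -> a = c /\ b = d.
Proof.
  intro E. split; [apply (f_equal cfst) in E | apply (f_equal csnd) in E];
    rewrite ?cfst_cpair, ?csnd_cpair in E; exact E.
Qed.

Lemma code_nat_inj c d : code_nat c = code_nat d -> c = d.
Proof.
  revert d; induction c; intros d E; destruct d; simpl in E;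
    repeat match goal with E : cpair _ _ = cpair _ _ |- _ => apply cpair_inj in E as [? ?] end;
    try discriminate; f_equal; auto.
Qed.

(** * Programming with codes *)

Lemma eval_cfst a b : eval cFst (cpair a b) a.
Proof. rewrite <- (cfst_cpair a b) at 2. constructor. Qed.

Lemma eval_csnd a b : eval cSnd (cpair a b) b.
Proof. rewrite <- (csnd_cpair a b) at 2. constructor. Qed.

(* The generated eliminator of [eval] gives no induction hypothesis for the
   premise of [ev_mu] about the earlier arguments, which is nested under [exists]. *)
Section EvalInduction.
Variable P : code -> nat -> nat -> Prop.
Hypothesis Hzero : forall x, P cZero x 0.
Hypothesis Hsucc : forall x, P cSucc x (S x).
Hypothesis Hid : forall x, P cId x x.
Hypothesis Hfst : forall x, P cFst x (fst (Cantor.of_nat x)).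
Hypothesis Hsnd : forall x, P cSnd x (snd (Cantor.of_nat x)).
Hypothesis Hpair : forall f g x a b, P f x a -> P g x b -> P (cPair f g) x (cpair a b).
Hypothesis Hcomp : forall f g x y z, P g x y -> P f y z -> P (cComp f g) x z.
Hypothesis Hrec0 : forall f g z x r, Cantor.of_nat z = (x, 0) -> P f x r -> P (cRec f g) z r.
Hypothesis HrecS : forall f g z x n r r', Cantor.of_nat z = (x, S n) ->
  P (cRec f g) (cpair x n) r -> P g (cpair x (cpair n r)) r' -> P (cRec f g) z r'.
Hypothesis Hmu : forall f x n, P f (cpair x n) 0 ->
  (forall m, m < n -> exists k, P f (cpair x m) (S k)) -> P (cMu f) x n.

Fixpoint eval_ind_nested c x y (H : eval c x y) {struct H} : P c x y.
Proof.
  destruct H.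
  - apply Hzero.
  - apply Hsucc.
  - apply Hid.
  - apply Hfst.
  - apply Hsnd.
  - apply Hpair; apply eval_ind_nested; assumption.
  - eapply Hcomp; apply eval_ind_nested; eassumption.
  - eapply Hrec0; [eassumption | apply eval_ind_nested; assumption].
  - eapply HrecS; [eassumption | apply eval_ind_nested; eassumption
                  | apply eval_ind_nested; eassumption].
  - apply Hmu; [apply eval_ind_nested; assumption |].
    intros m Hm. destruct (H0 m Hm) as [k Hk]. exists k. apply eval_ind_nested. exact Hk.
Defined.
End EvalInduction.

Fixpoint cconst (n : nat) : code :=
  match n with 0 => cZero | S n => cComp cSucc (cconst n) end.

Lemma eval_cconst n x : eval (cconst n) x n.
Proof. induction n; simpl; econstructor; eauto; constructor. Qed.

Definition cIterStep (cs : code) : code := cComp cs (cComp cSnd cSnd).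

Lemma eval_iterate c0 cs x n (F : nat -> nat) :
  eval c0 x (F 0) -> (forall m, eval cs (F m) (F (S m))) ->
  eval (cRec c0 (cIterStep cs)) (cpair x n) (F n).
Proof.
  intros H0 HS. induction n.
  - eapply ev_rec0; [apply of_nat_cpair | exact H0].
  - eapply ev_recS; [apply of_nat_cpair | exact IHn |].
    eapply ev_comp; [| apply HS]. eapply ev_comp; apply eval_csnd.
Qed.

Definition ifz (n a b : nat) : nat := match n with 0 => a | S _ => b end.

Definition cIfz : code := cRec cFst (cComp cSnd cFst).
Definition cPred : code := cComp (cRec cZero (cComp cFst cSnd)) (cPair cZero cId).

Lemma eval_cIfz a b n : eval cIfz (cpair (cpair a b) n) (ifz n a b).
Proof.
  induction n.
  - eapply ev_rec0; [apply of_nat_cpair | apply eval_cfst].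
  - eapply ev_recS; [apply of_nat_cpair | exact IHn |].
    eapply ev_comp; [apply eval_cfst | apply eval_csnd].
Qed.

Lemma eval_cPred n : eval cPred n (Nat.pred n).
Proof.
  eapply ev_comp; [constructor; constructor |].
  induction n.
  - eapply ev_rec0; [apply of_nat_cpair | constructor].
  - eapply ev_recS; [apply of_nat_cpair | exact IHn |].
    eapply ev_comp; [apply eval_csnd | apply eval_cfst].
Qed.

Inductive expr : Type :=
| Arg | Cst (n : nat) | Fst (e : expr) | Snd (e : expr) | Pr (e1 e2 : expr)
| Ifz (e0 e1 e2 : expr) | Pred (e : expr) | Succ (e : expr) | Comp (e1 e2 : expr).

Fixpoint denote (e : expr) (x : nat) : nat :=
  match e with
  | Arg => x
  | Cst n => n
  | Fst e => cfst (denote e x)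
  | Snd e => csnd (denote e x)
  | Pr e1 e2 => cpair (denote e1 x) (denote e2 x)
  | Ifz e0 e1 e2 => ifz (denote e0 x) (denote e1 x) (denote e2 x)
  | Pred e => Nat.pred (denote e x)
  | Succ e => S (denote e x)
  | Comp e1 e2 => denote e1 (denote e2 x)
  end.

Fixpoint compile (e : expr) : code :=
  match e with
  | Arg => cId
  | Cst n => cconst n
  | Fst e => cComp cFst (compile e)
  | Snd e => cComp cSnd (compile e)
  | Pr e1 e2 => cPair (compile e1) (compile e2)
  | Ifz e0 e1 e2 => cComp cIfz (cPair (cPair (compile e1) (compile e2)) (compile e0))
  | Pred e => cComp cPred (compile e)
  | Succ e => cComp cSucc (compile e)
  | Comp e1 e2 => cComp (compile e1) (compile e2)
  end.

Lemma eval_compile e x : eval (compile e) x (denote e x).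
Proof.
  revert x; induction e; intro x; simpl.
  - constructor.
  - apply eval_cconst.
  - econstructor; [apply IHe | constructor].
  - econstructor; [apply IHe | constructor].
  - constructor; auto.
  - econstructor; [constructor; [constructor; auto | auto] | apply eval_cIfz].
  - econstructor; [apply IHe | apply eval_cPred].
  - econstructor; [apply IHe | constructor].
  - econstructor; [apply IHe2 | apply IHe1].
Qed.

Lemma eval_compile_eq e x y : denote e x = y -> eval (compile e) x y.
Proof. intros <-. apply eval_compile. Qed.

(** * A universal function *)

(* A state is [EV c x s] (evaluate the code numbered [c]
   at [x], then continue with stack [s]) or [RET v s] (return [v] to [s]).  A stack
   is [0] or [push frame s]; the frames are [<0,<g,x>>] (second component of a
   pair still to compute), [<1,a>] (first component [a] of a pair computed),
   [<2,f>] (a composition continues with [f]), [<3,<g,<x,n>>>] (a recursion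
   continues with [g]) and [<4,<f,<x,n>>>] (minimisation tests [f] at [n]).
   Unknown instructions loop, and [RET v 0] is the only halting state. *)
Definition EV (c x s : nat) : nat := cpair 0 (cpair c (cpair x s)).
Definition RET (v s : nat) : nat := cpair 1 (cpair v s).
Definition push (frame s : nat) : nat := S (cpair frame s).

Definition eEV (c x s : expr) : expr := Pr (Cst 0) (Pr c (Pr x s)).
Definition eRET (v s : expr) : expr := Pr (Cst 1) (Pr v s).
Definition epush (frame s : expr) : expr := Succ (Pr frame s).

Fixpoint switch (t : expr) (l : list expr) (d : expr) : expr :=
  match l with nil => d | cons e l => Ifz t e (switch (Pred t) l d) end.

Local Notation ev_code := (Fst Arg).
Local Notation ev_arg := (Fst (Snd Arg)).
Local Notation ev_stack := (Snd (Snd Arg)).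
Local Notation ev_sub := (Snd ev_code).

Definition eval_step : expr :=
  switch (Fst ev_code) (
    eRET (Cst 0) ev_stack ::
    eRET (Succ ev_arg) ev_stack ::
    eRET ev_arg ev_stack ::
    eRET (Fst ev_arg) ev_stack ::
    eRET (Snd ev_arg) ev_stack ::
    eEV (Fst ev_sub) ev_arg (epush (Pr (Cst 0) (Pr (Snd ev_sub) ev_arg)) ev_stack) ::
    eEV (Snd ev_sub) ev_arg (epush (Pr (Cst 2) (Fst ev_sub)) ev_stack) ::
    Ifz (Snd ev_arg) (eEV (Fst ev_sub) (Fst ev_arg) ev_stack)
        (eEV ev_code (Pr (Fst ev_arg) (Pred (Snd ev_arg)))
             (epush (Pr (Cst 3) (Pr (Snd ev_sub) (Pr (Fst ev_arg) (Pred (Snd ev_arg)))))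
                    ev_stack)) ::
    eEV ev_sub (Pr ev_arg (Cst 0)) (epush (Pr (Cst 4) (Pr ev_sub (Pr ev_arg (Cst 0)))) ev_stack) ::
    nil) (eEV ev_code ev_arg ev_stack).

Local Notation ret_val := (Fst Arg).
Local Notation ret_stack := (Snd Arg).
Local Notation ret_rest := (Snd (Pred ret_stack)).
Local Notation ret_frame := (Fst (Pred ret_stack)).
Local Notation ret_data := (Snd ret_frame).

Definition return_step : expr :=
  Ifz ret_stack (eRET ret_val ret_stack)
   (switch (Fst ret_frame) (
     eEV (Fst ret_data) (Snd ret_data) (epush (Pr (Cst 1) ret_val) ret_rest) ::
     eRET (Pr ret_data ret_val) ret_rest ::
     eEV ret_data ret_val ret_rest ::
     eEV (Fst ret_data) (Pr (Fst (Snd ret_data)) (Pr (Snd (Snd ret_data)) ret_val)) ret_rest ::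
     Ifz ret_val (eRET (Snd (Snd ret_data)) ret_rest)
        (eEV (Fst ret_data) (Pr (Fst (Snd ret_data)) (Succ (Snd (Snd ret_data))))
            (epush (Pr (Cst 4) (Pr (Fst ret_data) (Pr (Fst (Snd ret_data))
                                                       (Succ (Snd (Snd ret_data)))))) ret_rest)) ::
     nil) (eRET ret_val ret_stack)).

Definition machine_step : expr :=
  Ifz (Fst Arg) (Comp eval_step (Snd Arg)) (Comp return_step (Snd Arg)).

Definition step (n : nat) : nat := denote machine_step n.

Definition steps (a b : nat) : Prop := exists n, Nat.iter n step a = b.

Lemma iter_step_add n m a : Nat.iter (n + m) step a = Nat.iter n step (Nat.iter m step a).
Proof. induction n; simpl; congruence. Qed.

Lemma steps_refl a : steps a a.
Proof. exists 0. reflexivity. Qed.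

Lemma steps_trans a b c : steps a b -> steps b c -> steps a c.
Proof. intros [n Hn] [m Hm]. exists (m + n). rewrite iter_step_add. congruence. Qed.

Lemma steps_step a b c : step a = b -> steps b c -> steps a c.
Proof. intros E H. apply steps_trans with b; [exists 1; exact E | exact H]. Qed.

Ltac machine_simpl :=
  cbn [denote switch machine_step eval_step return_step eEV eRET epush];
  repeat (rewrite ?cfst_cpair, ?csnd_cpair; cbn [ifz Nat.pred]).

Lemma step_EV c x s : step (EV c x s) = denote eval_step (cpair c (cpair x s)).
Proof. unfold step, EV. machine_simpl. reflexivity. Qed.

Lemma step_RET v s : step (RET v s) = denote return_step (cpair v s).
Proof. unfold step, RET. machine_simpl. reflexivity. Qed.

Ltac machine_step :=
  eapply steps_step; [first [rewrite step_EV | rewrite step_RET]; simpl code_nat;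
                      unfold push; machine_simpl; reflexivity |].

Lemma steps_search f x n s :
  (forall s, steps (EV f (cpair x n) s) (RET 0 s)) ->
  (forall m, m < n -> exists k, forall s, steps (EV f (cpair x m) s) (RET (S k) s)) ->
  forall d, d <= n ->
  steps (EV f (cpair x (n - d)) (push (cpair 4 (cpair f (cpair x (n - d)))) s)) (RET n s).
Proof.
  intros Hn Hlt d. induction d; intro Hd.
  - rewrite Nat.sub_0_r. eapply steps_trans; [apply Hn |]. machine_step. apply steps_refl.
  - destruct (Hlt (n - S d)) as [k Hk]; [lia |].
    eapply steps_trans; [apply Hk |]. machine_step.
    replace (S (n - S d)) with (n - d) by lia. apply IHd. lia.
Qed.

Lemma eval_steps c x y : eval c x y -> forall s, steps (EV (code_nat c) x s) (RET y s).
Proof.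
  revert c x y.
  apply (eval_ind_nested (fun c x y => forall s, steps (EV (code_nat c) x s) (RET y s)));
    try (intros; machine_step; apply steps_refl).
  - intros f g x a b Hf Hg s. machine_step.
    eapply steps_trans; [apply Hf |]. machine_step.
    eapply steps_trans; [apply Hg |]. machine_step. apply steps_refl.
  - intros f g x y z Hg Hf s. machine_step.
    eapply steps_trans; [apply Hg |]. machine_step. apply Hf.
  - intros f g z x r Hz Hf s.
    replace z with (cpair x 0) by (rewrite <- (Cantor.cancel_to_of z), Hz; reflexivity).
    machine_step. apply Hf.
  - intros f g z x n r r' Hz Hr Hg s.
    replace z with (cpair x (S n)) by (rewrite <- (Cantor.cancel_to_of z), Hz; reflexivity).
    machine_step. eapply steps_trans; [apply Hr |]. machine_step. apply Hg.
  - intros f x n H0 Hlt s. machine_step.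
    pose proof (steps_search (code_nat f) x n s H0 Hlt n (le_n n)) as H.
    rewrite Nat.sub_diag in H. exact H.
Qed.

Definition start : expr := eEV (Fst Arg) (Snd Arg) (Cst 0).

Definition cRun : code := cRec (compile start) (cIterStep (compile machine_step)).

Lemma eval_cRun x n : eval cRun (cpair x n) (Nat.iter n step (denote start x)).
Proof.
  apply (eval_iterate _ _ _ _ (fun m => Nat.iter m step (denote start x))).
  - apply eval_compile.
  - intro m. apply eval_compile.
Qed.

Definition halted : expr :=
  Ifz (Pred (Fst Arg)) (Ifz (Fst Arg) (Cst 1) (Ifz (Snd (Snd Arg)) (Cst 0) (Cst 1))) (Cst 1).

Lemma halted_spec n : denote halted n = 0 -> n = RET (cfst (csnd n)) 0.
Proof.
  simpl. destruct (cfst n) as [|[|k]] eqn:E; simpl; try discriminate.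
  destruct (csnd (csnd n)) eqn:E2; simpl; try discriminate. intros _.
  unfold RET. rewrite <- E, <- E2, !cpair_eta. reflexivity.
Qed.

Lemma halted_RET v : denote halted (RET v 0) = 0.
Proof. unfold RET. simpl. rewrite !cfst_cpair, !csnd_cpair. reflexivity. Qed.

Lemma iter_step_RET k v : Nat.iter k step (RET v 0) = RET v 0.
Proof.
  induction k; simpl; [reflexivity |]. rewrite IHk, step_RET. machine_simpl. reflexivity.
Qed.

Lemma exists_least (P : nat -> Prop) n : P n -> exists N, P N /\ forall m, m < N -> ~ P m.
Proof.
  induction n as [n IH] using (well_founded_induction Nat.lt_wf_0). intro Hn.
  destruct (classic (exists m, m < n /\ P m)) as [[m [Hm Pm]] | H].
  - exact (IH m Hm Pm).
  - exists n. split; [exact Hn |]. intros m Hm Pm. apply H. eauto.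
Qed.

Lemma run_first_halt c x y : eval c x y ->
  exists N, Nat.iter N step (denote start (cpair (code_nat c) x)) = RET y 0 /\
            forall m, m < N -> denote halted (Nat.iter m step (denote start (cpair (code_nat c) x))) <> 0.
Proof.
  intro H. destruct (eval_steps c x y H 0) as [n0 Hn0].
  set (I := denote start (cpair (code_nat c) x)).
  assert (HI : I = EV (code_nat c) x 0) by (unfold I, start, EV; machine_simpl; reflexivity).
  destruct (exists_least (fun n => denote halted (Nat.iter n step I) = 0) n0) as [N [HN Hmin]].
  { rewrite HI, Hn0. apply halted_RET. }
  exists N. split; [| exact Hmin].
  assert (NN : N <= n0).
  { destruct (Nat.le_gt_cases N n0) as [| Hlt]; [assumption |].
    exfalso. apply (Hmin n0 Hlt). rewrite HI, Hn0. apply halted_RET. }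
  apply halted_spec in HN.
  rewrite <- HI in Hn0. replace n0 with ((n0 - N) + N) in Hn0 by lia.
  rewrite iter_step_add, HN, iter_step_RET in Hn0. congruence.
Qed.

(* Run the machine until the first halting time (found by minimisation), and read off the value. *)
Definition cUniv : code :=
  cComp (compile (Fst (Snd Arg))) (cComp cRun (cPair cId (cMu (cComp (compile halted) cRun)))).

Lemma eval_cUniv c x y : eval c x y -> eval cUniv (cpair (code_nat c) x) y.
Proof.
  intro H. destruct (run_first_halt c x y H) as [N [HN Hmin]].
  econstructor; [econstructor; [constructor; [constructor | constructor] |] |].
  - econstructor; [apply eval_cRun |]. rewrite HN. rewrite <- (halted_RET y) at 2. apply eval_compile.
  - intros m Hm. destruct (denote halted (Nat.iter m step (denote start (cpair (code_nat c) x))))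
      as [| k] eqn:Ek; [exfalso; exact (Hmin m Hm Ek) |].
    exists k. econstructor; [apply eval_cRun |]. rewrite <- Ek. apply eval_compile.
  - apply eval_cRun.
  - rewrite HN. apply eval_compile_eq. unfold RET. simpl. rewrite csnd_cpair, cfst_cpair. reflexivity.
Qed.

(* The index [cpair (code_nat c) r] denotes [c] with first argument fixed to [r];
   this plays the role of the s-m-n theorem. *)
Definition cApp : code := cComp cUniv (compile (Pr (Fst (Fst Arg)) (Pr (Snd (Fst Arg)) (Snd Arg)))).

Definition app (n x y : nat) : Prop := eval cApp (cpair n x) y.

Lemma app_code c r x y : eval c (cpair r x) y -> app (cpair (code_nat c) r) x y.
Proof.
  intro H. econstructor; [apply eval_compile |]. simpl. rewrite !cfst_cpair, !csnd_cpair.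
  apply eval_cUniv. exact H.
Qed.

(* From here on [simpl] must not unfold code numbers, whose normal forms are huge. *)
Arguments cpair : simpl never.
Arguments code_nat : simpl never.
Arguments cconst : simpl never.

(** * Arrows of PAsm *)

Definition tracks (c : code) {X Y : pasm} (f : X -> Y) : Prop :=
  forall x, eval c (realizer X x) (realizer Y (f x)).

Lemma tracks_tracked {X Y : pasm} (f : X -> Y) c : tracks c f -> tracked f.
Proof. intro H. exists (code_nat c). intro x. exists c. split; [reflexivity | apply H]. Qed.

(* On an empty [X] the number tracking [f] need not be the number of a code. *)
Lemma tracked_tracks {X Y : pasm} {f : X -> Y} : tracked f -> exists c, tracks c f.
Proof.
  intros [t Ht]. destruct (classic (inhabited X)) as [[x0] | Hn].
  - destruct (Ht x0) as [c [Hc _]]. exists c. intro x. destruct (Ht x) as [c' [Hc' E]].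
    replace c with c' by (apply code_nat_inj; congruence). exact E.
  - exists cId. intro x. exfalso. exact (Hn (inhabits x)).
Qed.

Lemma tracked_choice {X Y : pasm} (P : X -> Y -> Prop) :
  (exists c, forall x, exists y, P x y /\ eval c (realizer X x) (realizer Y y)) <->
  (exists k : X -> Y, tracked k /\ forall x, P x (k x)).
Proof.
  split.
  - intros [c H]. exists (fun x => proj1_sig (constructive_indefinite_description _ (H x))).
    split; [apply tracks_tracked with c |]; intro x;
      apply (proj2_sig (constructive_indefinite_description _ (H x))).
  - intros [k [Hk Pk]]. destruct (tracked_tracks Hk) as [c Hc]. exists c. intro x. exists (k x). auto.
Qed.

Lemma tracked_id (X : pasm) : tracked (fun x : X => x).
Proof. apply tracks_tracked with cId. intro x. constructor. Qed.

Lemma tracked_comp {X Y Z : pasm} (f : X -> Y) (g : Y -> Z) :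
  tracked f -> tracked g -> tracked (fun x => g (f x)).
Proof.
  intros Hf Hg. destruct (tracked_tracks Hf) as [cf Hcf]. destruct (tracked_tracks Hg) as [cg Hcg].
  apply tracks_tracked with (cComp cg cf). intro x. econstructor; [apply Hcf | apply Hcg].
Qed.

Lemma tracked_unit (X : pasm) : tracked (fun _ : X => (tt : carrier pone)).
Proof. apply tracks_tracked with cZero. intro x. constructor. Qed.

Lemma tracked_fst (X Y : pasm) : tracked (fun p : pprod X Y => fst p).
Proof. apply tracks_tracked with cFst. intros [x y]. apply eval_cfst. Qed.

Lemma tracked_snd (X Y : pasm) : tracked (fun p : pprod X Y => snd p).
Proof. apply tracks_tracked with cSnd. intros [x y]. apply eval_csnd. Qed.

Lemma pb_snd_tracked {A B : pasm} (f : B -> A) (a : var A) :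
  tracked (fun p : pb_obj f a => snd (proj1_sig p)).
Proof. apply tracks_tracked with cSnd. intro p. apply eval_csnd. Qed.

Lemma tracked_pair (Z X Y : pasm) (f : Z -> X) (g : Z -> Y) : tracked f -> tracked g ->
  tracked (fun z : Z => ((f z, g z) : carrier (pprod X Y))).
Proof.
  intros Hf Hg. destruct (tracked_tracks Hf) as [cf Hcf]. destruct (tracked_tracks Hg) as [cg Hcg].
  apply tracks_tracked with (cPair cf cg). intro z. constructor; auto.
Qed.

Definition pexp (A B : pasm) : pasm :=
  Pasm (fun w : {f : A -> B & {n : nat | forall a, app n (realizer A a) (realizer B (f a))}} =>
          proj1_sig (projT2 w)).

Definition pev (A B : pasm) (p : pprod (pexp A B) A) : B := projT1 (fst p) (snd p).

Lemma pev_weak_eval (A B : pasm) : @weak_eval A B (pexp A B) (pev A B).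
Proof.
  split.
  - apply tracks_tracked with cApp. intros [[f [n Hn]] a]. apply Hn.
  - intros C g Hg. destruct (tracked_tracks Hg) as [cg Hcg].
    unshelve eexists (fun c => existT _ (fun a => g (c, a))
                                 (exist _ (cpair (code_nat cg) (realizer C c)) _)).
    + intro a. apply app_code. apply (Hcg (c, a)).
    + split; [| reflexivity].
      apply tracks_tracked with (cPair (cconst (code_nat cg)) cId). intro c.
      constructor; [apply eval_cconst | constructor].
Qed.

(** * The fibres of the doctrine of variations *)

Lemma vle_refl {A : pasm} (a : var A) : vle a a.
Proof. exists (fun y => y). split; [apply tracked_id | reflexivity]. Qed.

Lemma vle_trans {A : pasm} (a b c : var A) : vle a b -> vle b c -> vle a c.
Proof.
  intros [k [Hk Ek]] [l [Hl El]]. exists (fun y => l (k y)). split.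
  - apply tracked_comp; assumption.
  - intro y. rewrite El. apply Ek.
Qed.

Lemma veq_sym {A : pasm} (a b : var A) : veq a b -> veq b a.
Proof. intros [H1 H2]; split; assumption. Qed.

Lemma veq_trans {A : pasm} (a b c : var A) : veq a b -> veq b c -> veq a c.
Proof. intros [H1 H2] [H3 H4]. split; eapply vle_trans; eassumption. Qed.

Lemma veq_of_lower_bounds {A : pasm} (a b : var A) : (forall x, vle x a <-> vle x b) -> veq a b.
Proof. intro H. split; apply H, vle_refl. Qed.

Lemma veq_of_upper_bounds {A : pasm} (a b : var A) : (forall x, vle a x <-> vle b x) -> veq a b.
Proof. intro H. split; apply H, vle_refl. Qed.

Lemma vle_code {A : pasm} (a b : var A) :
  vle a b <-> exists c, forall y : vdom a, exists z : vdom b,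
                vmap b z = vmap a y /\ eval c (realizer _ y) (realizer _ z).
Proof. symmetry. apply tracked_choice. Qed.

Lemma vle_reindex {A B : pasm} (f : B -> A) (x : var B) (a : var A) :
  vle x (reindex f a) <->
  exists k : vdom x -> vdom a, tracked k /\ forall y, vmap a (k y) = f (vmap x y).
Proof.
  split.
  - intros [k [Hk Ek]]. exists (fun y => snd (proj1_sig (k y))). split.
    + exact (tracked_comp _ _ Hk (pb_snd_tracked f a)).
    + intro y. rewrite <- (proj2_sig (k y)). f_equal. apply (Ek y).
  - intros [k [Hk Ek]]. unshelve eexists (fun y => exist _ (vmap x y, k y) _).
    + symmetry. apply Ek.
    + split; [| reflexivity].
      destruct (tracked_tracks Hk) as [ck Hck]. destruct (tracked_tracks (vtr x)) as [cx Hcx].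
      apply tracks_tracked with (cPair cx ck). intro y. constructor; auto.
Qed.

Lemma vle_reindex_code {A B : pasm} (f : B -> A) (x : var B) (a : var A) :
  vle x (reindex f a) <->
  exists c, forall y : vdom x, exists z : vdom a,
    vmap a z = f (vmap x y) /\ eval c (realizer _ y) (realizer _ z).
Proof. rewrite vle_reindex. symmetry. apply tracked_choice. Qed.

Lemma reindex_mono {A B : pasm} (f : B -> A) (a b : var A) :
  vle a b -> vle (reindex f a) (reindex f b).
Proof.
  intros [k [Hk Ek]]. apply vle_reindex.
  exists (fun p : pb_obj f a => k (snd (proj1_sig p))). split.
  - exact (tracked_comp _ _ (pb_snd_tracked f a) Hk).
  - intros [[y u] e]. simpl. rewrite Ek. symmetry. exact e.
Qed.

Definition vpush {A B : pasm} (f : B -> A) (Hf : tracked f) (x : var B) : var A :=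
  Var (vdom x) (fun w => f (vmap x w)) (tracked_comp _ _ (vtr x) Hf).

Lemma vpush_reindex_adj {A B : pasm} (f : B -> A) (Hf : tracked f) (x : var B) (a : var A) :
  vle (vpush f Hf x) a <-> vle x (reindex f a).
Proof. rewrite vle_reindex. reflexivity. Qed.

Lemma vpush_mono {A B : pasm} (f : B -> A) (Hf : tracked f) (x y : var B) :
  vle x y -> vle (vpush f Hf x) (vpush f Hf y).
Proof. intros [k [Hk Ek]]. exists k. split; [exact Hk |]. intro w. simpl. rewrite Ek. reflexivity. Qed.

(* Case distinction on a tag; only the selected branch may be run, hence [cApp]. *)
Definition cCase (c0 c1 : code) : code :=
  cComp cApp (cPair (compile (Ifz (Fst Arg) (Cst (cpair (code_nat (cComp c0 cSnd)) 0))
                                             (Cst (cpair (code_nat (cComp c1 cSnd)) 0))))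
                    cSnd).

Lemma eval_cCase_0 c0 c1 r y : eval c0 r y -> eval (cCase c0 c1) (cpair 0 r) y.
Proof.
  intro H. econstructor; [constructor; [apply eval_compile | apply eval_csnd] |].
  cbn [denote]. rewrite cfst_cpair. apply app_code. econstructor; [apply eval_csnd | exact H].
Qed.

Lemma eval_cCase_1 c0 c1 r y : eval c1 r y -> eval (cCase c0 c1) (cpair 1 r) y.
Proof.
  intro H. econstructor; [constructor; [apply eval_compile | apply eval_csnd] |].
  cbn [denote]. rewrite cfst_cpair. apply app_code. econstructor; [apply eval_csnd | exact H].
Qed.

Definition vtop (A : pasm) : var A := Var A (fun x => x) (tracked_id A).

Definition pempty : pasm := Pasm (fun e : Empty_set => 0).

Definition vbot (A : pasm) : var A :=
  Var pempty (fun e => match e with end)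
      (tracks_tracked (fun e : pempty => match e with end : carrier A) cId (fun e => match e with end)).

Definition vmeet {A : pasm} (a b : var A) : var A :=
  Var (pb_obj (vmap a) b) (fun p => vmap a (fst (proj1_sig p)))
      (tracked_comp _ _ (pb_proj_tracked _ _) (vtr a)).

Definition join_obj {A : pasm} (a b : var A) : pasm :=
  Pasm (fun s : vdom a + vdom b =>
          match s with inl u => cpair 0 (realizer _ u) | inr v => cpair 1 (realizer _ v) end).

Definition join_map {A : pasm} (a b : var A) (s : join_obj a b) : A :=
  match s with inl u => vmap a u | inr v => vmap b v end.

Lemma join_map_tracked {A : pasm} (a b : var A) : tracked (join_map a b).
Proof.
  destruct (tracked_tracks (vtr a)) as [ca Ha]. destruct (tracked_tracks (vtr b)) as [cb Hb].
  apply tracks_tracked with (cCase ca cb).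
  intros [u | v]; [apply eval_cCase_0 | apply eval_cCase_1]; auto.
Qed.

Definition vjoin {A : pasm} (a b : var A) : var A := Var (join_obj a b) (join_map a b) (join_map_tracked a b).

Definition imp_obj {A : pasm} (a b : var A) : pasm :=
  Pasm (fun p : {q : carrier A * nat | forall u : vdom a, vmap a u = fst q ->
                   exists v : vdom b, vmap b v = fst q /\ app (snd q) (realizer _ u) (realizer _ v)} =>
          cpair (realizer A (fst (proj1_sig p))) (snd (proj1_sig p))).

Lemma imp_map_tracked {A : pasm} (a b : var A) : tracked (fun p : imp_obj a b => fst (proj1_sig p)).
Proof. apply tracks_tracked with cFst. intro p. apply eval_cfst. Qed.

Definition vimp {A : pasm} (a b : var A) : var A := Var (imp_obj a b) _ (imp_map_tracked a b).

Lemma vtop_is_top (A : pasm) : is_top (vtop A).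
Proof.
  intro x. destruct (tracked_tracks (vtr x)) as [c Hc].
  apply vle_code. exists c. intro y. exists (vmap x y). auto.
Qed.

Lemma vbot_is_bot (A : pasm) : is_bot (vbot A).
Proof. intro x. apply vle_code. exists cId. intro e. destruct e. Qed.

Lemma vmeet_is_meet {A : pasm} (a b : var A) : is_meet a b (vmeet a b).
Proof.
  intro x. split.
  - intro H. split; eapply vle_trans; try exact H; apply vle_code.
    + exists cFst. intros [[u v] e]. exists u. split; [reflexivity | apply eval_cfst].
    + exists cSnd. intros [[u v] e]. exists v. split; [simpl in *; congruence | apply eval_csnd].
  - intros [Ha Hb]. apply vle_code in Ha as [ca Ha]. apply vle_code in Hb as [cb Hb].
    apply vle_code. exists (cPair ca cb). intro y.
    destruct (Ha y) as [u [Eu Hu]]. destruct (Hb y) as [v [Ev Hv]].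
    unshelve eexists (exist _ (u, v) _).
    + simpl. congruence.
    + simpl. split; [assumption | constructor; assumption].
Qed.

Lemma vjoin_is_join {A : pasm} (a b : var A) : is_join a b (vjoin a b).
Proof.
  intro x. split.
  - intro H. split; eapply vle_trans; try exact H; apply vle_code.
    + exists (cPair cZero cId). intro u. exists (inl u). split; [reflexivity |].
      constructor; constructor.
    + exists (cPair (cconst 1) cId). intro v. exists (inr v). split; [reflexivity |].
      constructor; [apply eval_cconst | constructor].
  - intros [Ha Hb]. apply vle_code in Ha as [ca Ha]. apply vle_code in Hb as [cb Hb].
    apply vle_code. exists (cCase ca cb). intros [u | v].
    + destruct (Ha u) as [z [Ez Hz]]. exists z. split; [exact Ez | apply eval_cCase_0; exact Hz].
    + destruct (Hb v) as [z [Ez Hz]]. exists z. split; [exact Ez | apply eval_cCase_1; exact Hz].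
Qed.

Lemma meet_veq_vmeet {A : pasm} (a b m : var A) : is_meet a b m -> veq m (vmeet a b).
Proof.
  intro H. apply veq_of_lower_bounds. intro x. rewrite (H x), (vmeet_is_meet a b x). reflexivity.
Qed.

Lemma join_veq_vjoin {A : pasm} (a b j : var A) : is_join a b j -> veq j (vjoin a b).
Proof.
  intro H. apply veq_of_upper_bounds. intro x. rewrite (H x), (vjoin_is_join a b x). reflexivity.
Qed.

Lemma vmeet_vimp_le {A : pasm} (a b : var A) : vle (vmeet (vimp a b) a) b.
Proof.
  apply vle_code. exists (cComp cApp (cPair (cComp cSnd cFst) cSnd)).
  intros [[[[p n] Hq] u] e]. simpl in e.
  destruct (Hq u (eq_sym e)) as [v [Ev Hv]]. exists v. split; [simpl in *; congruence |].
  simpl. econstructor; [| exact Hv]. constructor.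
  - eapply ev_comp; [apply eval_cfst | apply eval_csnd].
  - apply eval_csnd.
Qed.

Lemma vimp_intro {A : pasm} (a b x : var A) : vle (vmeet x a) b -> vle x (vimp a b).
Proof.
  intro H. apply vle_code in H as [c Hc]. destruct (tracked_tracks (vtr x)) as [cx Hcx].
  apply vle_code. exists (cPair cx (cPair (cconst (code_nat c)) cId)). intro y.
  unshelve eexists (exist _ (vmap x y, cpair (code_nat c) (realizer _ y)) _).
  - simpl. intros u Eu.
    destruct (Hc (exist _ (y, u) (eq_sym Eu))) as [v [Ev Hv]].
    exists v. split; [exact Ev |]. apply app_code. exact Hv.
  - split; [reflexivity |]. constructor; [apply Hcx |].
    constructor; [apply eval_cconst | constructor].
Qed.

Lemma vimp_is_imp {A : pasm} (a b : var A) : is_imp a b (vimp a b).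
Proof.
  intros x m Hm. destruct (meet_veq_vmeet _ _ _ Hm) as [mM Mm]. split.
  - intro H. eapply vle_trans; [exact mM |]. eapply vle_trans; [| apply (vmeet_vimp_le a b)].
    apply vmeet_is_meet. split; [eapply vle_trans; [| exact H] | ];
      apply (vmeet_is_meet x a); apply vle_refl.
  - intro H. apply vimp_intro. eapply vle_trans; eassumption.
Qed.

(** * Reindexing *)

Lemma reindex_id {A : pasm} (a : var A) : veq (reindex (fun x : A => x) a) a.
Proof.
  apply veq_of_lower_bounds. intro x. rewrite vle_reindex.
  split; intros [k [Hk Ek]]; exists k; split; auto.
Qed.

Lemma reindex_comp {A B C : pasm} (f : B -> A) (g : C -> B) (Hf : tracked f) (Hg : tracked g)
  (a : var A) : veq (reindex (fun c : C => f (g c)) a) (reindex g (reindex f a)).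
Proof.
  apply veq_of_lower_bounds. intro x.
  rewrite <- (vpush_reindex_adj _ (tracked_comp _ _ Hg Hf)), <- (vpush_reindex_adj g Hg),
    <- (vpush_reindex_adj f Hf).
  reflexivity.
Qed.

Lemma reindex_veq {A B : pasm} (f : B -> A) (a b : var A) :
  veq a b -> veq (reindex f a) (reindex f b).
Proof. intros [H1 H2]; split; apply reindex_mono; assumption. Qed.

Lemma reindex_top {A B : pasm} (f : B -> A) (Hf : tracked f) (t : var A) :
  is_top t -> is_top (reindex f t).
Proof. intros Ht x. apply (vpush_reindex_adj f Hf). apply Ht. Qed.

Lemma reindex_bot {A B : pasm} (f : B -> A) (b : var A) : is_bot b -> is_bot (reindex f b).
Proof.
  intros Hb x. destruct (Hb (vbot A)) as [k _].
  apply vle_code. exists cId. intro p. destruct (k (snd (proj1_sig p))).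
Qed.

Lemma reindex_meet {A B : pasm} (f : B -> A) (Hf : tracked f) (a b m : var A) :
  is_meet a b m -> is_meet (reindex f a) (reindex f b) (reindex f m).
Proof. intros Hm x. rewrite <- !(vpush_reindex_adj f Hf). apply Hm. Qed.

Lemma reindex_vjoin_le {A B : pasm} (f : B -> A) (a b : var A) :
  vle (reindex f (vjoin a b)) (vjoin (reindex f a) (reindex f b)).
Proof.
  apply vle_code. exists (compile (Pr (Fst (Snd Arg)) (Pr (Fst Arg) (Snd (Snd Arg))))).
  intros [[y [u | v]] e].
  - exists (inl (exist _ (y, u) e)). split; [reflexivity |].
    apply eval_compile_eq. simpl. repeat rewrite ?cfst_cpair, ?csnd_cpair. reflexivity.
  - exists (inr (exist _ (y, v) e)). split; [reflexivity |].
    apply eval_compile_eq. simpl. repeat rewrite ?cfst_cpair, ?csnd_cpair. reflexivity.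
Qed.

Lemma reindex_join {A B : pasm} (f : B -> A) (a b j : var A) :
  is_join a b j -> is_join (reindex f a) (reindex f b) (reindex f j).
Proof.
  intros Hj x. split.
  - intro H. split; eapply vle_trans; try exact H; apply reindex_mono; apply Hj, vle_refl.
  - intro H. eapply vle_trans; [apply reindex_mono, (join_veq_vjoin a b j Hj) |].
    eapply vle_trans; [apply reindex_vjoin_le |]. apply vjoin_is_join, H.
Qed.

Lemma vpush_meet {A B : pasm} (f : B -> A) (Hf : tracked f) (x m : var B) (a : var A) :
  is_meet x (reindex f a) m -> is_meet (vpush f Hf x) a (vpush f Hf m).
Proof.
  intros Hm z. split.
  - intro H. split; eapply vle_trans; try exact H.
    + apply vpush_mono. apply Hm, vle_refl.
    + apply vpush_reindex_adj. apply Hm, vle_refl.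
  - intros [[k [Hk Ek]] [k2 [Hk2 Ek2]]].
    set (z' := Var (vdom z) (fun w => vmap x (k w)) (tracked_comp _ _ Hk (vtr x))).
    assert (H1 : vle z' x) by (exists k; split; [assumption | reflexivity]).
    assert (H2 : vle z' (reindex f a)).
    { apply vle_reindex. exists k2. split; [assumption |].
      intro y. simpl. rewrite Ek2. symmetry. apply Ek. }
    destruct (proj2 (Hm z') (conj H1 H2)) as [k3 [Hk3 Ek3]].
    exists k3. split; [assumption |]. intro y. simpl. rewrite Ek3. apply Ek.
Qed.

Lemma reindex_imp {A B : pasm} (f : B -> A) (Hf : tracked f) (a b i : var A) :
  is_imp a b i -> is_imp (reindex f a) (reindex f b) (reindex f i).
Proof.
  intros Hi x m Hm. rewrite <- !(vpush_reindex_adj f Hf). apply Hi. apply vpush_meet. exact Hm.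
Qed.

Lemma fibre_heyting (A : pasm) :
  (exists t : var A, is_top t) /\ (exists b : var A, is_bot b) /\
  (forall a b : var A,
     (exists m, is_meet a b m) /\ (exists j, is_join a b j) /\ (exists i, is_imp a b i)).
Proof.
  split; [exists (vtop A); apply vtop_is_top |]. split; [exists (vbot A); apply vbot_is_bot |].
  intros a b. split; [exists (vmeet a b); apply vmeet_is_meet |].
  split; [exists (vjoin a b); apply vjoin_is_join | exists (vimp a b); apply vimp_is_imp].
Qed.

Lemma reindex_heyting {A B : pasm} (f : B -> A) (Hf : tracked f) :
  (forall a b : var A, vle a b -> vle (reindex f a) (reindex f b)) /\
  (forall t : var A, is_top t -> is_top (reindex f t)) /\
  (forall b : var A, is_bot b -> is_bot (reindex f b)) /\
  (forall a b m : var A, is_meet a b m -> is_meet (reindex f a) (reindex f b) (reindex f m)) /\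
  (forall a b j : var A, is_join a b j -> is_join (reindex f a) (reindex f b) (reindex f j)) /\
  (forall a b i : var A, is_imp a b i -> is_imp (reindex f a) (reindex f b) (reindex f i)).
Proof.
  split; [apply reindex_mono |]. split; [apply reindex_top, Hf |].
  split; [apply reindex_bot |]. split; [apply reindex_meet, Hf |].
  split; [apply reindex_join | apply reindex_imp, Hf].
Qed.

(** * Equality and quantifiers *)

Definition vdelta (A : pasm) : var (pprod A A) :=
  Var A (fun a => ((a, a) : carrier (pprod A A))) (tracked_pair _ _ _ _ _ (tracked_id A) (tracked_id A)).

Definition diag_last {X A : pasm} (p : pprod X A) : pprod (pprod X A) A := (p, snd p).

Lemma diag_last_tracked (X A : pasm) : tracked (@diag_last X A).
Proof. apply tracked_pair; [apply tracked_id | apply tracked_snd]. Qed.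

Lemma meet_vdelta_veq {X A : pasm} (alpha : var (pprod X A)) (m : var (pprod (pprod X A) A)) :
  is_meet (reindex (fun p : pprod (pprod X A) A => fst p) alpha)
          (reindex (fun p : pprod (pprod X A) A =>
                      ((snd (fst p), snd p) : carrier (pprod A A))) (vdelta A)) m ->
  veq m (vpush diag_last (diag_last_tracked X A) alpha).
Proof.
  intro Hm. destruct (proj1 (Hm m) (vle_refl m)) as [Hm1 Hm2]. split.
  - apply vle_reindex_code in Hm1 as [c1 H1]. apply vle_reindex_code in Hm2 as [c2 H2].
    apply vle_code. exists c1. intro y.
    destruct (H1 y) as [z1 [E1 R1]]. destruct (H2 y) as [z2 [E2 _]]. exists z1. split; [| exact R1].
    simpl. unfold diag_last. rewrite E1. simpl in E2. destruct (vmap m y) as [[p a1] a2].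
    simpl in *. congruence.
  - apply Hm. destruct (tracked_tracks (vtr alpha)) as [ca Hca]. split; apply vle_reindex_code.
    + exists cId. intro y. exists y. split; [reflexivity | constructor].
    + exists (cComp cSnd ca). intro y. exists (snd (vmap alpha y)). split; [reflexivity |].
      econstructor; [apply Hca |]. simpl. destruct (vmap alpha y). apply eval_csnd.
Qed.

Lemma vdelta_elementary (X A : pasm) (alpha : var (pprod X A)) (beta m : var (pprod (pprod X A) A)) :
  is_meet (reindex (fun p : pprod (pprod X A) A => fst p) alpha)
          (reindex (fun p : pprod (pprod X A) A =>
                      ((snd (fst p), snd p) : carrier (pprod A A))) (vdelta A)) m ->
  (vle m beta <->
   vle alpha (reindex (fun p : pprod X A => ((p, snd p) : carrier (pprod (pprod X A) A))) beta)).
Proof.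
  intro Hm. destruct (meet_vdelta_veq alpha m Hm) as [H1 H2].
  rewrite <- (vpush_reindex_adj diag_last (diag_last_tracked X A)).
  split; intro H; eapply vle_trans; eassumption.
Qed.

Definition vexists {A B : pasm} (alpha : var (pprod A B)) : var A :=
  vpush (fun p : pprod A B => fst p) (tracked_fst A B) alpha.

Lemma vexists_is_exists {A B : pasm} (alpha : var (pprod A B)) : is_exists_of alpha (vexists alpha).
Proof. intro beta. apply vpush_reindex_adj. Qed.

Definition forall_obj {A B : pasm} (alpha : var (pprod A B)) : pasm :=
  Pasm (fun p : {q : carrier A * nat | forall b : B, exists u : vdom alpha,
                   vmap alpha u = (fst q, b) /\ app (snd q) (realizer B b) (realizer _ u)} =>
          cpair (realizer A (fst (proj1_sig p))) (snd (proj1_sig p))).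

Lemma forall_map_tracked {A B : pasm} (alpha : var (pprod A B)) :
  tracked (fun p : forall_obj alpha => fst (proj1_sig p)).
Proof. apply tracks_tracked with cFst. intro p. apply eval_cfst. Qed.

Definition vforall {A B : pasm} (alpha : var (pprod A B)) : var A :=
  Var (forall_obj alpha) _ (forall_map_tracked alpha).

Lemma vforall_elim {A B : pasm} (alpha : var (pprod A B)) :
  vle (reindex (fun p : pprod A B => fst p) (vforall alpha)) alpha.
Proof.
  apply vle_code. exists (cComp cApp (cPair (cComp cSnd cSnd) (cComp cSnd cFst))).
  intros [[[a b] [[a0 n] Hq]] e]. simpl in e.
  destruct (Hq b) as [u [Eu Hu]]. exists u. split.
  - simpl in *. rewrite Eu. congruence.
  - simpl. econstructor; [| exact Hu]. constructor.
    + eapply ev_comp; apply eval_csnd.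
    + eapply ev_comp; [apply eval_cfst | apply eval_csnd].
Qed.

Lemma vforall_intro {A B : pasm} (alpha : var (pprod A B)) (beta : var A) :
  vle (reindex (fun p : pprod A B => fst p) beta) alpha -> vle beta (vforall alpha).
Proof.
  intro H. apply vle_code in H as [c Hc]. destruct (tracked_tracks (vtr beta)) as [cb Hcb].
  set (c' := cComp c (cPair (cPair (cComp cb cFst) cSnd) cFst)).
  apply vle_code. exists (cPair cb (cPair (cconst (code_nat c')) cId)). intro y.
  unshelve eexists (exist _ (vmap beta y, cpair (code_nat c') (realizer _ y)) _).
  - intro b. destruct (Hc (exist _ ((vmap beta y, b), y) eq_refl)) as [u [Eu Hu]].
    exists u. split; [exact Eu |]. apply app_code. econstructor; [| exact Hu].
    constructor; [constructor; [econstructor; [apply eval_cfst | apply Hcb] | apply eval_csnd]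
                 | apply eval_cfst].
  - split; [reflexivity |]. constructor; [apply Hcb |].
    constructor; [apply eval_cconst | constructor].
Qed.

Lemma vforall_is_forall {A B : pasm} (alpha : var (pprod A B)) : is_forall_of alpha (vforall alpha).
Proof.
  intro beta. split; [| apply vforall_intro].
  intro H. eapply vle_trans; [apply reindex_mono, H | apply vforall_elim].
Qed.

Lemma exists_veq_vexists {A B : pasm} (alpha : var (pprod A B)) e :
  is_exists_of alpha e -> veq e (vexists alpha).
Proof.
  intro H. apply veq_of_upper_bounds. intro x. rewrite (H x), (vexists_is_exists alpha x). reflexivity.
Qed.

Lemma forall_veq_vforall {A B : pasm} (alpha : var (pprod A B)) u :
  is_forall_of alpha u -> veq u (vforall alpha).
Proof.
  intro H. apply veq_of_lower_bounds. intro x. rewrite (H x), (vforall_is_forall alpha x). reflexivity.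
Qed.

Lemma vexists_mono {A B : pasm} (a b : var (pprod A B)) : vle a b -> vle (vexists a) (vexists b).
Proof. apply vpush_mono. Qed.

Lemma vforall_mono {A B : pasm} (a b : var (pprod A B)) : vle a b -> vle (vforall a) (vforall b).
Proof. intro H. apply vforall_intro. eapply vle_trans; [apply vforall_elim | exact H]. Qed.

(** * Beck-Chevalley conditions *)

Section BeckChevalley.
Variables (A B C : pasm) (f : C -> A).
Hypothesis Hf : tracked f.

Let f_x_id (p : pprod C B) : pprod A B := (f (fst p), snd p).

Lemma f_x_id_tracked : tracked f_x_id.
Proof. apply tracked_pair; [apply tracked_comp; [apply tracked_fst | exact Hf] | apply tracked_snd]. Qed.

(* Both sides are reindexings along [fun p => f (fst p)], the two paths around the square. *)
Lemma reindex_fst_reindex_veq (a : var A) :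
  veq (reindex (fun p : pprod C B => fst p) (reindex f a))
      (reindex f_x_id (reindex (fun p : pprod A B => fst p) a)).
Proof.
  eapply veq_trans; [apply veq_sym, (reindex_comp f (fun p : pprod C B => fst p) Hf (tracked_fst C B)) |].
  exact (reindex_comp (fun p : pprod A B => fst p) f_x_id (tracked_fst A B) f_x_id_tracked a).
Qed.

Lemma vexists_reindex_le (alpha : var (pprod A B)) :
  vle (vexists (reindex f_x_id alpha)) (reindex f (vexists alpha)).
Proof.
  apply vexists_is_exists. eapply vle_trans; [| apply reindex_fst_reindex_veq].
  apply reindex_mono, vexists_is_exists, vle_refl.
Qed.

Lemma reindex_vexists_le (alpha : var (pprod A B)) :
  vle (reindex f (vexists alpha)) (vexists (reindex f_x_id alpha)).
Proof.
  destruct (tracked_tracks (vtr alpha)) as [ca Hca].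
  apply vle_code. exists (cPair (cPair cFst (cComp cSnd (cComp ca cSnd))) cSnd).
  intros [[c0 u] e]. simpl in e.
  unshelve eexists (exist _ ((c0, snd (vmap alpha u)), u) _).
  - unfold f_x_id. simpl. rewrite e. destruct (vmap alpha u); reflexivity.
  - split; [reflexivity |]. simpl.
    constructor; [constructor |]; [apply eval_cfst | | apply eval_csnd].
    eapply ev_comp; [eapply ev_comp; [apply eval_csnd | apply Hca] |].
    destruct (vmap alpha u). apply eval_csnd.
Qed.

Lemma vforall_reindex_le (alpha : var (pprod A B)) :
  vle (vforall (reindex f_x_id alpha)) (reindex f (vforall alpha)).
Proof.
  destruct (tracked_tracks Hf) as [cf Hcf].
  set (proj_witness := cComp cSnd cApp).
  apply vle_reindex_code. exists (cPair (cComp cf cFst) (cPair (cconst (code_nat proj_witness)) cSnd)).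
  intros [[c0 n] H]. simpl.
  unshelve eexists (exist _ (f c0, cpair (code_nat proj_witness) n) _).
  - intro b. destruct (H b) as [[[[c1 b1] u] e] [Et Ht]].
    simpl in Et, e. injection Et as -> ->.
    exists u. split; [symmetry; exact e |]. apply app_code.
    econstructor; [exact Ht | apply eval_csnd].
  - split; [reflexivity |]. simpl. constructor.
    + econstructor; [apply eval_cfst | apply Hcf].
    + constructor; [apply eval_cconst | apply eval_csnd].
Qed.

Lemma reindex_vforall_le (alpha : var (pprod A B)) :
  vle (reindex f (vforall alpha)) (vforall (reindex f_x_id alpha)).
Proof.
  apply vforall_intro. eapply vle_trans; [apply reindex_fst_reindex_veq |].
  apply reindex_mono, vforall_elim.
Qed.

End BeckChevalley.

Lemma exists_beck_chevalley {A B C : pasm} (f : C -> A) (Hf : tracked f) (alpha : var (pprod A B))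
  (e : var A) (e' : var C) :
  is_exists_of alpha e ->
  is_exists_of (reindex (fun p : pprod C B => ((f (fst p), snd p) : carrier (pprod A B))) alpha) e' ->
  veq e' (reindex f e).
Proof.
  intros H H'. eapply veq_trans; [exact (exists_veq_vexists _ _ H') |].
  eapply veq_trans; [split; [apply vexists_reindex_le | apply reindex_vexists_le]; exact Hf |].
  apply reindex_veq, veq_sym, exists_veq_vexists, H.
Qed.

Lemma forall_beck_chevalley {A B C : pasm} (f : C -> A) (Hf : tracked f) (alpha : var (pprod A B))
  (u : var A) (u' : var C) :
  is_forall_of alpha u ->
  is_forall_of (reindex (fun p : pprod C B => ((f (fst p), snd p) : carrier (pprod A B))) alpha) u' ->
  veq u' (reindex f u).
Proof.
  intros H H'. eapply veq_trans; [exact (forall_veq_vforall _ _ H') |].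
  eapply veq_trans; [split; [apply vforall_reindex_le | apply reindex_vforall_le]; exact Hf |].
  apply reindex_veq, veq_sym, forall_veq_vforall, H.
Qed.

(** * Choice *)

Lemma rule_of_choice {A B : pasm} (R : var (pprod A B)) :
  vle (vtop A) (vexists R) ->
  exists f : A -> B, tracked f /\ valid (reindex (fun a : A => ((a, f a) : carrier (pprod A B))) R).
Proof.
  intros [k [Hk Ek]]. simpl in Ek.
  exists (fun a => snd (vmap R (k a))). split.
  - apply tracked_comp with (f := fun a => vmap R (k a)); [apply tracked_comp; [exact Hk | apply vtr] |].
    apply tracked_snd.
  - intro y. apply vle_reindex. exists (fun w => k (vmap y w)). split.
    + apply tracked_comp; [apply vtr | exact Hk].
    + intro w. rewrite <- (Ek (vmap y w)) at 2. apply surjective_pairing.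
Qed.

(* A realizer of [forall a, exists b, R a b] contains an index computing a witness from [a]. *)
Lemma vforall_vexists_choice {A B : pasm} (R : var (pprod A B)) :
  exists g : pprod (vdom (vforall (reindex (fun p : pprod pone A => snd p) (vexists R)))) A -> vdom R,
    tracked g /\ forall c a, fst (vmap R (g (c, a))) = a.
Proof.
  set (L := vforall (reindex (fun p : pprod pone A => snd p) (vexists R))).
  assert (Hch : forall (c : vdom L) (a : A), exists u : vdom (reindex (fun p : pprod pone A => snd p) (vexists R)),
             vmap _ u = (tt, a) /\ app (snd (proj1_sig c)) (realizer A a) (realizer _ u)).
  { intros [[[] n] Hq] a. apply Hq. }
  set (P := fun (p : pprod (vdom L) A) (v : vdom R) => fst (vmap R v) = snd p).
  enough (exists k : pprod (vdom L) A -> vdom R, tracked k /\ forall p, P p (k p)) as [k [Hk Pk]]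
    by (exists k; split; [exact Hk | intros c a; apply (Pk (c, a))]).
  apply tracked_choice. exists (cComp cSnd (cComp cApp (cPair (cComp cSnd cFst) cSnd))).
  intros [c a]. destruct (Hch c a) as [[[[t a'] v] e] [Eu Happ]].
  simpl in Eu, e. injection Eu as _ ->.
  exists v. split; [symmetry; exact e |].
  eapply ev_comp; [| apply eval_csnd]. eapply ev_comp; [| exact Happ].
  constructor; [| apply eval_csnd]. eapply ev_comp; [apply eval_cfst | apply eval_csnd].
Qed.

Lemma vpush_unit_le_vexists {W : pasm} (U : var W) :
  vle (vpush (fun _ : W => (tt : carrier pone)) (tracked_unit W) U)
      (vexists (reindex (fun p : pprod pone W => snd p) U)).
Proof.
  destruct (tracked_tracks (vtr U)) as [cU HcU].
  apply vle_code. exists (cPair (cPair cZero cU) cId). intro u.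
  unshelve eexists (exist _ ((tt, vmap U u), u) _); [reflexivity | split; [reflexivity |]].
  constructor; [constructor; [constructor | apply HcU] | constructor].
Qed.

Lemma axiom_of_choice {A B W : pasm} (R : var (pprod A B)) (ev : pprod W A -> B) :
  weak_eval ev ->
  vle (vforall (reindex (fun p : pprod pone A => snd p) (vexists R)))
      (vexists (reindex (fun p : pprod pone W => snd p)
         (vforall (reindex (fun p : pprod W A => ((snd p, ev p) : carrier (pprod A B))) R)))).
Proof.
  intros [_ Hev].
  set (L := vforall (reindex (fun p : pprod pone A => snd p) (vexists R))).
  set (U := vforall (reindex (fun p : pprod W A => ((snd p, ev p) : carrier (pprod A B))) R)).
  destruct (vforall_vexists_choice R) as [g [Hg Eg]]. fold L in g, Hg, Eg.
  destruct (Hev (vdom L) (fun p => snd (vmap R (g p)))) as [h [Hh Eh]].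
  { apply tracked_comp with (f := fun p => vmap R (g p)); [apply tracked_comp; [exact Hg | apply vtr] |].
    apply tracked_snd. }
  assert (HU : vle (vpush h Hh (vtop (vdom L))) U).
  { apply vforall_intro, vle_reindex.
    exists (fun p => g (snd (proj1_sig p), snd (fst (proj1_sig p)))). split.
    - apply (tracked_comp (fun p : pb_obj (fun q : pprod W A => fst q) (vpush h Hh (vtop (vdom L))) =>
                               ((snd (proj1_sig p), snd (fst (proj1_sig p))) : carrier (pprod (vdom L) A))) g);
        [apply tracked_pair | exact Hg].
      + apply pb_snd_tracked.
      + apply tracked_comp; [apply pb_proj_tracked | apply tracked_snd].
    - intros [[[w a] c] e]. simpl in e |- *. rewrite e, Eh, (surjective_pairing (vmap R _)) at 1.
      rewrite Eg. reflexivity. }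
  eapply vle_trans; [| apply vpush_unit_le_vexists].
  eapply vle_trans; [| apply (vpush_mono _ _ _ _ HU)].
  exists (fun c => c). split; [apply tracked_id |]. intro c. destruct (vmap L c). reflexivity.
Qed.

(** * Natural numbers *)

Lemma nno_recursion (A Y : pasm) (g0 : A -> Y) (gs : Y -> Y) : tracked g0 -> tracked gs ->
  exists h : pprod A pN -> Y, tracked h /\
    (forall a : A, h (a, 0) = g0 a) /\
    (forall (a : A) (n : nat), h (a, S n) = gs (h (a, n))) /\
    (forall h' : pprod A pN -> Y, tracked h' ->
       (forall a : A, h' (a, 0) = g0 a) ->
       (forall (a : A) (n : nat), h' (a, S n) = gs (h' (a, n))) ->
       forall p, h' p = h p).
Proof.
  intros H0 Hs. destruct (tracked_tracks H0) as [c0 Hc0]. destruct (tracked_tracks Hs) as [cs Hcs].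
  exists (fun p : pprod A pN => Nat.iter (snd p) gs (g0 (fst p))). split; [| split; [| split]].
  - apply tracks_tracked with (cRec c0 (cIterStep cs)). intros [a n].
    apply (eval_iterate _ _ _ n (fun m => realizer Y (Nat.iter m gs (g0 a)))); [apply Hc0 | intro m; apply Hcs].
  - reflexivity.
  - reflexivity.
  - intros h' _ E0 ES [a n]. simpl. induction n; [apply E0 |]. rewrite ES, IHn. reflexivity.
Qed.

Lemma pN_induction (A : pasm) (ph : var (pprod A pN)) :
  valid (reindex (fun a : A => ((a, 0) : carrier (pprod A pN))) ph) ->
  vle ph (reindex (fun p : pprod A pN => ((fst p, S (snd p)) : carrier (pprod A pN))) ph) ->
  valid ph.
Proof.
  intros H0 HS.
  destruct (proj1 (vle_reindex _ (vtop A) ph) (H0 (vtop A))) as [k0 [Hk0 Ek0]]. apply vle_reindex in HS as [k [Hk Ek]].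
  destruct (tracked_tracks Hk0) as [c0 Hc0]. destruct (tracked_tracks Hk) as [cs Hcs].
  assert (Ei : forall a n, vmap ph (Nat.iter n k (k0 a)) = (a, n)).
  { intros a n. induction n; simpl; [apply Ek0 |]. rewrite Ek, IHn. reflexivity. }
  intro y. destruct (tracked_tracks (vtr y)) as [cy Hcy].
  apply vle_code. exists (cComp (cRec c0 (cIterStep cs)) cy). intro w.
  exists (Nat.iter (snd (vmap y w)) k (k0 (fst (vmap y w)))). split.
  - rewrite Ei. symmetry. apply surjective_pairing.
  - eapply ev_comp; [apply Hcy |]. destruct (vmap y w) as [a n]. simpl.
    apply (eval_iterate _ _ _ _ (fun m => realizer _ (Nat.iter m k (k0 a)))); [apply Hc0 | intro m; apply Hcs].
Qed.

Theorem lemma4p2 :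
  ((forall X : pasm, tracked (fun _ : X => (tt : carrier pone))) /\
   (forall X Y : pasm, tracked (fun p : pprod X Y => fst p) /\
                       tracked (fun p : pprod X Y => snd p)) /\
   (forall (Z X Y : pasm) (f : Z -> X) (g : Z -> Y), tracked f -> tracked g ->
      tracked (fun z : Z => ((f z, g z) : carrier (pprod X Y))))) /\
  (forall A B : pasm, exists (W : pasm) (ev : pprod W A -> B), @weak_eval A B W ev) /\
  (forall (A : pasm) (a : var A), veq (reindex (fun x : A => x) a) a) /\
  (forall (A B C : pasm) (f : B -> A) (g : C -> B), tracked f -> tracked g ->
     forall a : var A, veq (reindex (fun c : C => f (g c)) a) (reindex g (reindex f a))) /\
  (forall A : pasm,
     (exists t : var A, is_top t) /\ (exists b : var A, is_bot b) /\
     (forall a b : var A,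
        (exists m, is_meet a b m) /\ (exists j, is_join a b j) /\ (exists i, is_imp a b i))) /\
  (forall (A B : pasm) (f : B -> A), tracked f ->
     (forall a b : var A, vle a b -> vle (reindex f a) (reindex f b)) /\
     (forall t : var A, is_top t -> is_top (reindex f t)) /\
     (forall b : var A, is_bot b -> is_bot (reindex f b)) /\
     (forall a b m : var A, is_meet a b m -> is_meet (reindex f a) (reindex f b) (reindex f m)) /\
     (forall a b j : var A, is_join a b j -> is_join (reindex f a) (reindex f b) (reindex f j)) /\
     (forall a b i : var A, is_imp a b i -> is_imp (reindex f a) (reindex f b) (reindex f i))) /\
  (forall A : pasm, exists delta : var (pprod A A),
     forall (X : pasm) (alpha : var (pprod X A)) (beta m : var (pprod (pprod X A) A)),
       is_meet (reindex (fun p : pprod (pprod X A) A => fst p) alpha)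
               (reindex (fun p : pprod (pprod X A) A =>
                           ((snd (fst p), snd p) : carrier (pprod A A))) delta) m ->
       (vle m beta <->
        vle alpha (reindex (fun p : pprod X A => ((p, snd p) : carrier (pprod (pprod X A) A))) beta))) /\
  (forall A B : pasm,
     (exists E : var (pprod A B) -> var A, forall alpha, is_exists_of alpha (E alpha)) /\
     (exists F : var (pprod A B) -> var A, forall alpha, is_forall_of alpha (F alpha))) /\
  (forall (A B C : pasm) (f : C -> A), tracked f ->
     forall (alpha : var (pprod A B)) (e e' : var _),
       is_exists_of alpha e ->
       is_exists_of (reindex (fun p : pprod C B => ((f (fst p), snd p) : carrier (pprod A B))) alpha) e' ->
       veq e' (reindex f e)) /\
  (forall (A B C : pasm) (f : C -> A), tracked f ->
     forall (alpha : var (pprod A B)) (u u' : var _),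
       is_forall_of alpha u ->
       is_forall_of (reindex (fun p : pprod C B => ((f (fst p), snd p) : carrier (pprod A B))) alpha) u' ->
       veq u' (reindex f u)) /\
  (forall (A B : pasm) (R : var (pprod A B)),
     (forall e : var A, is_exists_of R e -> valid e) ->
     exists f : A -> B, tracked f /\
       valid (reindex (fun a : A => ((a, f a) : carrier (pprod A B))) R)) /\
  (forall (A B : pasm) (R : var (pprod A B)) (W : pasm) (ev : pprod W A -> B),
     @weak_eval A B W ev ->
     forall (e1 : var A) (l : var pone) (u : var W) (r : var pone),
       is_exists_of R e1 ->
       is_forall_of (reindex (fun p : pprod pone A => snd p) e1) l ->
       is_forall_of (reindex (fun p : pprod W A => ((snd p, ev p) : carrier (pprod A B))) R) u ->
       is_exists_of (reindex (fun p : pprod pone W => snd p) u) r ->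
       vle l r) /\
  (tracked (fun _ : pone => (0 : carrier pN)) /\ tracked (fun n : pN => (S n : carrier pN)) /\
   forall (A Y : pasm) (g0 : A -> Y) (gs : Y -> Y), tracked g0 -> tracked gs ->
     exists h : pprod A pN -> Y, tracked h /\
       (forall a : A, h (a, 0) = g0 a) /\
       (forall (a : A) (n : nat), h (a, S n) = gs (h (a, n))) /\
       (forall h' : pprod A pN -> Y, tracked h' ->
          (forall a : A, h' (a, 0) = g0 a) ->
          (forall (a : A) (n : nat), h' (a, S n) = gs (h' (a, n))) ->
          forall p, h' p = h p)) /\
  (forall (A : pasm) (ph : var (pprod A pN)),
     valid (reindex (fun a : A => ((a, 0) : carrier (pprod A pN))) ph) ->
     vle ph (reindex (fun p : pprod A pN => ((fst p, S (snd p)) : carrier (pprod A pN))) ph) ->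
     valid ph).
Proof.
  split; [split; [apply tracked_unit | split; [split; [apply tracked_fst | apply tracked_snd] | apply tracked_pair]] |].
  split; [intros A B; exists (pexp A B), (pev A B); apply pev_weak_eval |].
  split; [intros A a; apply reindex_id |].
  split; [intros A B C f g Hf Hg a; apply reindex_comp; assumption |].
  split; [apply fibre_heyting |].
  split; [intros A B f Hf; apply reindex_heyting, Hf |].
  split; [intro A; exists (vdelta A); intros X alpha beta m; apply vdelta_elementary |].
  split; [intros A B; split; [exists vexists; apply vexists_is_exists | exists vforall; apply vforall_is_forall] |].
  split; [intros A B C f Hf alpha e e'; apply exists_beck_chevalley, Hf |].
  split; [intros A B C f Hf alpha u u'; apply forall_beck_chevalley, Hf |].
  split; [intros A B R H; apply rule_of_choice, (H _ (vexists_is_exists R)) |].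
  split.
  { intros A B R W ev Hev e1 l u r H1 H2 H3 H4.
    eapply vle_trans; [apply (forall_veq_vforall _ _ H2) |].
    eapply vle_trans; [apply vforall_mono, reindex_mono, (exists_veq_vexists _ _ H1) |].
    eapply vle_trans; [apply (axiom_of_choice R ev Hev) |].
    eapply vle_trans; [apply vexists_mono, reindex_mono, (forall_veq_vforall _ _ H3) |].
    apply (exists_veq_vexists _ _ H4). }
  split; [| apply pN_induction].
  split; [apply tracks_tracked with cZero; intro; constructor |].
  split; [apply tracks_tracked with cSucc; intro; constructor | apply nno_recursion].
Qed.
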